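(* For every natural number $k\ge 2$, the class $\mathcal{H}_k$ is closed under taking minors: if $H\in\mathcal{H}_k$ and $G$ is a minor of $H$, then $G\in\mathcal{H}_k$.
   Context: All graphs are finite; parallel edges are allowed, loops are not. A length-function on a graph $G$ is a map $\ell:E(G)\to\mathbb{R}^+$ (strictly positive reals); $\ell(H)=\sum_{e\in E(H)}\ell(e)$ for subgraphs $H$, which carry the restricted length-function. $\mathrm{sd}_G(A)$ is the minimum of $\ell(S)$ over connected subgraphs $S\subseteq G$ with $A\subseteq V(S)$ ($\infty$ if none). $H\subseteq G$ is $k$-geodesic in $G$ if $\mathrm{sd}_H(A)=\mathrm{sd}_G(A)$ for all $A\subseteq V(H)$ with $|A|\le k$, and fully geodesic if it is $k$-geodesic for all $k$. For $k\ge2$, $\mathcal{H}_k$ is the class of all graphs $H$ such that for every graph $G\supseteq H$ and every length-function on $G$ for which $H$ is $k$-geodesic in $G$, $H$ is fully geodesic in $G$. *)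

From mathcomp Require Import all_boot.
From Stdlib Require Import Reals.
Set Implicit Arguments. Unset Strict Implicit. Unset Printing Implicit Defensive.

(* A finite multigraph: parallel edges allowed, loops not.  Each edge has an
   (arbitrarily oriented) pair of distinct endpoints. *)
Record graph := Graph {
  gV : finType;
  gE : finType;
  gends : gE -> gV * gV;
  gnoloop : forall e, (gends e).1 != (gends e).2 }.

Section GraphDefs.
Variable G : graph.
Local Notation V := (gV G).
Local Notation E := (gE G).

Definition joins (e : E) (x y : V) : bool :=
  (gends e == (x, y)) || (gends e == (y, x)).

Definition subg := ({set V} * {set E})%type.

Definition is_subg (S : subg) : bool :=
  [forall e in S.2, ((gends e).1 \in S.1) && ((gends e).2 \in S.1)].

Definition adj_in (S : subg) : rel V :=
  fun x y => [&& x \in S.1, y \in S.1 & [exists e in S.2, joins e x y]].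

Definition connectedb (S : subg) : bool :=
  (S.1 != set0) && [forall x in S.1, forall y in S.1, connect (adj_in S) x y].

Definition lsum (l : E -> R) (s : seq E) : R := foldr Rplus 0%R (map l s).
Definition glength (l : E -> R) (S : subg) : R := lsum l (enum S.2).

Definition omin (a b : option R) : option R :=
  match a, b with
  | None, _ => b
  | _, None => a
  | Some x, Some y => Some (Rmin x y)
  end.

(* Steiner distance: minimum length of a connected subgraph containing A;
   None encodes infinity. *)
Definition sd (l : E -> R) (A : {set V}) : option R :=
  foldr (fun S acc => omin (Some (glength l S)) acc) None
    [seq S <- enum {: {set V} * {set E}} |
       [&& is_subg S, connectedb S & A \subset S.1]].

Definition length_fun (l : E -> R) : Prop := forall e, (0 < l e)%R.

Definition induced (B : {set V}) : subg :=
  (B, [set e | ((gends e).1 \in B) && ((gends e).2 \in B)]).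
End GraphDefs.

Definition embedding (H G : graph) (fV : gV H -> gV G) (fE : gE H -> gE G) : Prop :=
  injective fV /\ injective fE /\
  forall e, joins (fE e) (fV (gends e).1) (fV (gends e).2).

Definition k_geodesic (k : nat) (H G : graph) (fV : gV H -> gV G)
    (fE : gE H -> gE G) (l : gE G -> R) : Prop :=
  forall A : {set gV H}, #|A| <= k ->
    sd (fun e => l (fE e)) A = sd l (fV @: A).

Definition fully_geodesic (H G : graph) (fV : gV H -> gV G)
    (fE : gE H -> gE G) (l : gE G -> R) : Prop :=
  forall A : {set gV H}, sd (fun e => l (fE e)) A = sd l (fV @: A).

Definition in_Hk (k : nat) (H : graph) : Prop :=
  forall (G : graph) (fV : gV H -> gV G) (fE : gE H -> gE G) (l : gE G -> R),
    embedding fV fE -> length_fun l ->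
    k_geodesic k fV fE l -> fully_geodesic fV fE l.

Definition minor (G H : graph) : Prop :=
  exists (B : gV G -> {set gV H}) (fE : gE G -> gE H),
    (forall v, connectedb (induced (B v))) /\
    (forall u v, u != v -> [disjoint B u & B v]) /\
    injective fE /\
    (forall e, exists x y, [/\ x \in B (gends e).1, y \in B (gends e).2
                              & joins (fE e) x y]).

(* Let G be a minor of H with branch sets B v, let G be k-geodesic in G', and
   suppose some terminal set A0 of G has a cheaper connecting subgraph in G'
   than in G.  Glue H and G' by identifying each vertex v of G with a vertex of
   B v, and choose lengths so that contracting the branch sets is almost free,
   edges of H modelling edges of G cost as in G, every other edge of H is
   prohibitively heavy, and the edges of G' are slightly lengthened.
   Then H is k-geodesic in the glued graph: a minimal subgraph connecting at
   most k terminals of H either contains a heavy edge, which is a bridge and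
   splits the problem into two smaller ones, or contracts onto a subgraph of
   G', where k-geodesicity of G provides a subgraph of G that blows up into H.
   As H lies in H_k, H is even fully geodesic there, which fails for the
   representatives of A0: the cheap subgraph of G' lifts to the glued graph,
   while a subgraph of H connecting them uses a heavy edge or contracts onto a
   subgraph of G connecting A0. *)

From HB Require Import structures.
From mathcomp Require Import all_boot.
From mathcomp Require Import zify.
From Stdlib Require Import Reals Lra Classical.
Set Implicit Arguments. Unset Strict Implicit. Unset Printing Implicit Defensive.

HB.instance Definition _ := Monoid.isComLaw.Build R 0%R Rplus
  (fun x y z => esym (Rplus_assoc x y z)) Rplus_comm Rplus_0_l.

Notation "\rsum_ ( i 'in' A ) F" := (\big[Rplus/0%R]_(i in A) F)
  (at level 41, F at level 41, i, A at level 50).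

Section RealSums.
Variable T : finType.
Implicit Types (A B : {set T}) (f g : T -> R).

Lemma rsum_ge0 A f : (forall x, x \in A -> 0 <= f x)%R -> (0 <= \rsum_(x in A) f x)%R.
Proof. by move=> f0; apply: (big_ind (fun x => 0 <= x)%R) => // *; lra. Qed.

Lemma rsum_le A f g :
  (forall x, x \in A -> f x <= g x)%R -> (\rsum_(x in A) f x <= \rsum_(x in A) g x)%R.
Proof. by move=> fg; apply: (big_ind2 (fun x y => x <= y)%R) => // *; lra. Qed.

Lemma rsum_subset_le A B f : (forall x, x \in B -> 0 <= f x)%R -> A \subset B ->
  (\rsum_(x in A) f x <= \rsum_(x in B) f x)%R.
Proof.
move=> f0 sAB; rewrite [X in (_ <= X)%R](big_setID A) /= (setIidPr sAB).
have : (0 <= \rsum_(x in B :\: A) f x)%R.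
  by apply: rsum_ge0 => x /setDP [/f0].
lra.
Qed.

Lemma rsum_setU_le A B f : (forall x, 0 <= f x)%R ->
  (\rsum_(x in A :|: B) f x <= \rsum_(x in A) f x + \rsum_(x in B) f x)%R.
Proof.
move=> f0; rewrite [X in (X <= _)%R](big_setID A) /= setIUl setIid.
rewrite (setUidPl (subsetIr B A)).
have : (\rsum_(x in (A :|: B) :\: A) f x <= \rsum_(x in B) f x)%R.
  by apply: rsum_subset_le => //; rewrite setDUl setDv set0U subsetDl.
lra.
Qed.

Lemma rsum_setU_disjoint A B f : [disjoint A & B] ->
  \rsum_(x in A :|: B) f x = (\rsum_(x in A) f x + \rsum_(x in B) f x)%R.
Proof.
move=> dAB; rewrite -bigU //; apply: eq_bigl => x; by rewrite !inE.
Qed.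

Lemma rsum_setD1 A f x : x \in A -> \rsum_(y in A) f y = (f x + \rsum_(y in A :\ x) f y)%R.
Proof. exact: big_setD1. Qed.

Lemma rsum_const A (c : R) : \rsum_(x in A) c = (INR #|A| * c)%R.
Proof.
rewrite big_const; elim: #|A| => [|n IH]; first by rewrite /=; lra.
rewrite [iter _ _ _]/= IH S_INR; lra.
Qed.

End RealSums.

Lemma rsum_imset (T U : finType) (A : {set T}) (h : T -> U) (f : U -> R) :
  {in A &, injective h} -> \rsum_(y in h @: A) f y = \rsum_(x in A) f (h x).
Proof. exact: big_imset. Qed.

Lemma rsum_imset_le (T U : finType) (A : {set T}) (h : T -> U) (f : U -> R) :
  (forall y, 0 <= f y)%R -> (\rsum_(y in h @: A) f y <= \rsum_(x in A) f (h x))%R.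
Proof.
move=> f0; rewrite (partition_big_imset h) /=; apply: rsum_le => _ /imsetP [x xA ->].
rewrite (bigD1 x) /=; last by rewrite xA eqxx.
have : (0 <= \big[Rplus/0%R]_(i | (i \in A) && (h i == h x) && (i != x)) f (h i))%R.
  by apply: (big_ind (fun x => 0 <= x)%R) => // *; lra.
lra.
Qed.

Lemma glengthE (K : graph) (l : gE K -> R) (S : subg K) :
  glength l S = \rsum_(e in S.2) l e.
Proof.
rewrite /glength /lsum -big_enum /=.
by elim: (enum S.2) => [|a s IH]; rewrite ?big_nil // big_cons /= IH.
Qed.

Section Connect.
Variables T U : finType.

Lemma connect_homo (e : rel T) (e' : rel U) (f : T -> U) :
  (forall a b, e a b -> connect e' (f a) (f b)) ->
  forall x y, connect e x y -> connect e' (f x) (f y).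
Proof.
move=> fe x y /connectP [p pth ->]; elim: p x pth => [|z p IH] x /=; first by rewrite connect0.
by case/andP=> exz /IH; apply: connect_trans (fe _ _ exz).
Qed.

Lemma connect_inv (e : rel T) (P : pred T) x y :
  (forall u v, P u -> e u v -> P v) -> P x -> connect e x y -> P y.
Proof.
move=> eP Px /connectP [p pth ->]; elim: p x Px pth => [|z p IH] x Px //=.
by case/andP=> /(eP _ _ Px) /IH; apply.
Qed.

Lemma connect_restrict (e : rel T) (P : pred T) x y :
  (forall u v, P u -> e u v -> P v) -> P x -> connect e x y ->
  connect (fun u v => [&& P u, P v & e u v]) x y.
Proof.
move=> eP Px /connectP [p pth ->]; elim: p x Px pth => [|z p IH] x Px /=; first by rewrite connect0.
case/andP=> exz /(IH _ (eP _ _ Px exz)); apply: connect_trans; apply: connect1.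
by rewrite Px (eP _ _ Px exz) exz.
Qed.

Lemma connect_first_step (e : rel T) x y : connect e x y -> x != y -> exists z, e x z.
Proof.
move=> /connectP [[|z p] pth ->] /=; first by rewrite eqxx.
by case/andP: pth => exz _ _; exists z.
Qed.

Lemma connect_blowup (eU : rel U) (eT : rel T) (beta : U -> {set T}) (Q : pred U) :
  (forall u v, eU u v -> Q u /\ Q v) ->
  (forall u, Q u -> forall x y, x \in beta u -> y \in beta u -> connect eT x y) ->
  (forall u v, eU u v -> exists x y, [/\ x \in beta u, y \in beta v & connect eT x y]) ->
  forall u v, Q u -> connect eU u v ->
  forall x y, x \in beta u -> y \in beta v -> connect eT x y.
Proof.
move=> eQ blob touch u v Qu /connectP [p pth ->]; elim: p u Qu pth => [|z p IH] u Qu /=.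
  by move=> _; exact: blob.
case/andP => euz pth x y xu yv; have [_ Qz] := eQ _ _ euz.
have [x1 [y1 [x1u y1z c1]]] := touch _ _ euz.
apply: connect_trans (blob _ Qu _ _ xu x1u) _; apply: connect_trans c1 _.
exact: IH Qz pth y1 y y1z yv.
Qed.

End Connect.

Lemma card_setU1_le (T : finType) (A X : {set T}) z w :
  X \subset A -> w \in A -> w \notin X -> #|z |: X| <= #|A|.
Proof.
move=> sXA wA wX; apply: leq_trans (_ : #|X|.+1 <= _).
  by rewrite cardsU1; case: (z \in X).
by apply: proper_card; rewrite properE sXA; apply/subsetPn; exists w.
Qed.

Lemma foldr_omin_spec (T : eqType) (f : T -> R) (s : seq T) :
  (foldr (fun a acc => omin (Some (f a)) acc) None s = None <-> s = [::]) /\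
  (forall x, foldr (fun a acc => omin (Some (f a)) acc) None s = Some x ->
     (exists2 a, a \in s & f a = x) /\ forall a, a \in s -> (x <= f a)%R).
Proof.
elim: s => [|S s [IH1 IH2]] /=; first by split.
split; first by case: (foldr _ _ _).
move=> x; case E: (foldr _ _ _) => [y|] /= [<-].
  have [[S1 S1s <-] minS1] := IH2 y E.
  rewrite /Rmin; case: Rle_dec => hle; split.
  - by exists S; rewrite ?inE ?eqxx.
  - by move=> S2; rewrite inE => /orP [/eqP -> | /minS1]; lra.
  - by exists S1; rewrite // inE S1s orbT.
  - by move=> S2; rewrite inE => /orP [/eqP -> | /minS1]; lra.
have s0 : s = [::] by case: IH1 => /(_ E).
split; first by exists S; rewrite ?inE ?eqxx.
by move=> S2; rewrite s0 inE => /eqP ->; lra.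
Qed.

Section GraphBasics.
Variable K : graph.
Implicit Types (S : subg K) (l : gE K -> R) (A : {set gV K}).

Lemma joins_sym (e : gE K) x y : joins e x y = joins e y x.
Proof. by rewrite /joins orbC. Qed.

Lemma joins_ends (e : gE K) : joins e (gends e).1 (gends e).2.
Proof. by rewrite /joins; case: (gends e) => a b /=; rewrite eqxx. Qed.

Lemma joinsP (e : gE K) x y : joins e x y ->
  (x = (gends e).1 /\ y = (gends e).2) \/ (x = (gends e).2 /\ y = (gends e).1).
Proof. by rewrite /joins; case: (gends e) => a b /= /orP [] /eqP [-> ->]; [left|right]. Qed.

Lemma adj_in_sym S : symmetric (adj_in S).
Proof.
move=> x y; rewrite /adj_in; apply/and3P/and3P => [][-> -> /existsP[e /andP[eS j]]];
  by split=> //; apply/existsP; exists e; rewrite eS joins_sym j.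
Qed.

Lemma connect_adj_in_sym S x y : connect (adj_in S) x y = connect (adj_in S) y x.
Proof. exact/sym_connect_sym/adj_in_sym. Qed.

Lemma adj_inP S x y : adj_in S x y ->
  [/\ x \in S.1, y \in S.1 & exists2 e, e \in S.2 & joins e x y].
Proof. by case/and3P=> -> -> /existsP [e /andP [eS j]]; split=> //; exists e. Qed.

Lemma adj_inI S x y e : x \in S.1 -> y \in S.1 -> e \in S.2 -> joins e x y -> adj_in S x y.
Proof. by move=> xS yS eS j; rewrite /adj_in xS yS; apply/existsP; exists e; rewrite eS. Qed.

Lemma adj_in_subset S1 S2 x y :
  S1.1 \subset S2.1 -> S1.2 \subset S2.2 -> adj_in S1 x y -> adj_in S2 x y.
Proof.
move=> s1 s2 /adj_inP [xS yS [e eS j]].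
by apply: (adj_inI _ _ (subsetP s2 _ eS) j); apply: (subsetP s1).
Qed.

Lemma connectedP S x y : connectedb S -> x \in S.1 -> y \in S.1 -> connect (adj_in S) x y.
Proof. by case/andP=> _ /forall_inP cS xS yS; move/forall_inP: (cS x xS); apply. Qed.

Lemma connectedI S r : r \in S.1 -> (forall z, z \in S.1 -> connect (adj_in S) r z) ->
  connectedb S.
Proof.
move=> rS rconn; apply/andP; split; first by apply/set0Pn; exists r.
apply/forall_inP => x xS; apply/forall_inP => y yS.
by apply: connect_trans (rconn y yS); rewrite connect_adj_in_sym rconn.
Qed.

Lemma is_subgP S : is_subg S -> forall e, e \in S.2 -> (gends e).1 \in S.1 /\ (gends e).2 \in S.1.
Proof. by move/forall_inP => sS e /sS /andP. Qed.

Lemma is_subgI S :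
  (forall e, e \in S.2 -> (gends e).1 \in S.1 /\ (gends e).2 \in S.1) -> is_subg S.
Proof. by move=> sS; apply/forall_inP => e /sS [-> ->]. Qed.

Lemma joins_subg S e x y : is_subg S -> e \in S.2 -> joins e x y -> x \in S.1 /\ y \in S.1.
Proof. by move=> /is_subgP sS /sS [a b] /joinsP [][-> ->]. Qed.

Lemma connected_incident S e x : is_subg S -> connectedb S -> e \in S.2 -> x \in S.1 ->
  exists y, adj_in S x y.
Proof.
move=> sS cS eS xS; have [e1 e2] := is_subgP sS eS.
have [z zS xz] : exists2 z, z \in S.1 & x != z.
  case: (eqVneq x (gends e).1) => [->|]; last by exists (gends e).1.
  by exists (gends e).2; last exact: gnoloop.
exact: connect_first_step (connectedP cS xS zS) xz.
Qed.

Definition connects A S := [&& is_subg S, connectedb S & A \subset S.1].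

Lemma glength_ge0 l S : length_fun l -> (0 <= glength l S)%R.
Proof. by move=> l0; rewrite glengthE; apply: rsum_ge0 => x _; apply: Rlt_le. Qed.

Lemma glength_subset l S' S : length_fun l -> S'.2 \subset S.2 ->
  (glength l S' <= glength l S)%R.
Proof. by move=> l0 sS; rewrite !glengthE; apply: rsum_subset_le => // x _; apply: Rlt_le. Qed.

Lemma sd_None l A : sd l A = None -> forall S, ~~ connects A S.
Proof.
rewrite /sd; have [/proj1 sd0 _] := foldr_omin_spec (glength l)
  [seq S <- enum {: {set gV K} * {set gE K}} | connects A S].
move=> /sd0 s0 S; apply/negP => AS.
suff : S \in [seq S <- enum {: {set gV K} * {set gE K}} | connects A S] by rewrite s0.
by rewrite mem_filter mem_enum AS.
Qed.

Lemma sd_Some l A x : sd l A = Some x ->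
  (exists2 S, connects A S & glength l S = x) /\ forall S, connects A S -> (x <= glength l S)%R.
Proof.
rewrite /sd; have [_ sdx] := foldr_omin_spec (glength l)
  [seq S <- enum {: {set gV K} * {set gE K}} | connects A S].
move=> /sdx [[S + <-] minS]; rewrite mem_filter mem_enum andbT => AS.
split; first by exists S.
by move=> S' AS'; apply: minS; rewrite mem_filter mem_enum AS'.
Qed.

Lemma sd_connects l A S : connects A S -> exists x, sd l A = Some x.
Proof.
move=> AS; case E: (sd l A) => [x|]; first by exists x.
by move: (sd_None E S); rewrite AS.
Qed.

End GraphBasics.

Lemma sd_eq (K1 K2 : graph) (l1 : gE K1 -> R) (l2 : gE K2 -> R) A1 A2 :
  (forall S, connects A1 S -> exists2 S', connects A2 S' & (glength l2 S' <= glength l1 S)%R) ->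
  (forall S, connects A2 S -> exists2 S', connects A1 S' & (glength l1 S' <= glength l2 S)%R) ->
  sd l1 A1 = sd l2 A2.
Proof.
move=> sim12 sim21.
case E1: (sd l1 A1) => [x1|]; case E2: (sd l2 A2) => [x2|] //.
- have [[S1 c1 <-] m1] := sd_Some E1; have [[S2 c2 <-] m2] := sd_Some E2.
  have [S2' c2' le2] := sim12 S1 c1; have [S1' c1' le1] := sim21 S2 c2.
  have := m1 _ c1'; have := m2 _ c2'; move=> *; congr Some; lra.
- have [[S1 c1 _] _] := sd_Some E1; have [S2' c2' _] := sim12 S1 c1.
  by move: (sd_None E2 S2'); rewrite c2'.
- have [[S2 c2 _] _] := sd_Some E2; have [S1' c1' _] := sim21 S2 c2.
  by move: (sd_None E1 S1'); rewrite c1'.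
Qed.

Lemma sd_neq (K1 K2 : graph) (l1 : gE K1 -> R) (l2 : gE K2 -> R) A1 A2 S2 :
  connects A2 S2 -> (forall S, connects A1 S -> (glength l2 S2 < glength l1 S)%R) ->
  sd l1 A1 <> sd l2 A2.
Proof.
move=> c2 cheaper E; have [x2 E2] := sd_connects l2 c2.
have [_ m2] := sd_Some E2; have := m2 _ c2.
rewrite -E in E2; have [[S1 c1 <-] _] := sd_Some E2; have := cheaper _ c1; lra.
Qed.

Section MinimalConnects.
Variable K : graph.
Implicit Types (S : subg K) (A : {set gV K}).

Definition sub_subg S' S := (S'.1 \subset S.1) && (S'.2 \subset S.2).

Definition minimal A S := connects A S /\ forall S', connects A S' -> sub_subg S' S -> S' = S.

Lemma sub_subg_trans S1 S2 S3 : sub_subg S1 S2 -> sub_subg S2 S3 -> sub_subg S1 S3.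
Proof.
by case/andP=> s1 s2 /andP [s1' s2']; rewrite /sub_subg (subset_trans s1 s1') (subset_trans s2 s2').
Qed.

Lemma sub_subg_card S' S :
  sub_subg S' S -> #|S.1| + #|S.2| <= #|S'.1| + #|S'.2| -> S' = S.
Proof.
case/andP=> s1 s2 le; have c1 := subset_leq_card s1; have c2 := subset_leq_card s2.
have /eqP e1 : S'.1 == S.1 by rewrite eqEcard s1 /=; lia.
have /eqP e2 : S'.2 == S.2 by rewrite eqEcard s2 /=; lia.
by case: S' S e1 e2 {s1 s2 le c1 c2} => [? ?] [? ?] /= -> ->.
Qed.

Lemma exists_minimal A S : connects A S -> exists2 S0, minimal A S0 & sub_subg S0 S.
Proof.
move=> AS; have AS_S : connects A S && sub_subg S S by rewrite AS /sub_subg !subxx.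
case: (@arg_minnP _ S (fun S0 => connects A S0 && sub_subg S0 S)
  (fun S0 => #|S0.1| + #|S0.2|) AS_S) => S0 /andP [AS0 S0S] min0.
exists S0 => //.
split=> // S' AS' sS'.
apply: (sub_subg_card sS').
by apply: min0; rewrite AS' (sub_subg_trans sS' S0S).
Qed.

End MinimalConnects.

(* Minimality makes every edge a bridge whose two sides both meet the terminals. *)
Section Bridges.
Variables (K : graph) (A : {set gV K}) (S : subg K) (e : gE K).
Hypotheses (mS : minimal A S) (eS : e \in S.2).

Definition del_edge : subg K := (S.1, S.2 :\ e).
Definition side z : {set gV K} := [set w in S.1 | connect (adj_in del_edge) z w].
Definition side_subg z : subg K :=
  (side z, [set f in S.2 :\ e | ((gends f).1 \in side z) && ((gends f).2 \in side z)]).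

Let AS : connects A S. Proof. by case: mS. Qed.
Let sS : is_subg S. Proof. by case/and3P: AS. Qed.
Let cS : connectedb S. Proof. by case/and3P: AS. Qed.

Lemma side_subg_edge z f : f \in (side_subg z).2 ->
  [/\ f \in S.2, f != e, (gends f).1 \in side z & (gends f).2 \in side z].
Proof. by rewrite [f \in _]inE in_setD1 => /andP [/andP [-> ->] /andP [-> ->]]. Qed.

Lemma card_side_subg z : #|(side_subg z).2| < #|S.2|.
Proof.
rewrite (cardsD1 e S.2) eS add1n ltnS; apply: subset_leq_card.
by apply/subsetP => f /side_subg_edge [fS fe _ _]; rewrite !inE fe fS.
Qed.

Section Ends.
Variables x y : gV K.
Hypothesis jxy : joins e x y.

Lemma bridge_end_in : x \in S.1. Proof. by case: (joins_subg sS eS jxy). Qed.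

Lemma adj_in_del_edge u w : adj_in S u w ->
  adj_in del_edge u w \/ ((u = x /\ w = y) \/ (u = y /\ w = x)).
Proof.
case/adj_inP => uS wS [f fS j]; case: (eqVneq f e) => [fe|fne].
  by right; subst f; case/joinsP: j => [][-> ->]; case/joinsP: jxy => [][-> ->]; tauto.
by left; apply: (@adj_inI _ del_edge u w f uS wS _ j); rewrite /= !inE fne.
Qed.

Lemma bridge : ~~ connect (adj_in del_edge) x y.
Proof.
apply/negP => cxy.
have del_conn u w : adj_in S u w -> connect (adj_in del_edge) u w.
  case/adj_in_del_edge => [/connect1 //|[[-> ->]|[-> ->]]] //.
  by rewrite connect_adj_in_sym.
have A_del : connects A del_edge.
  case/and3P: AS => _ /andP [S0 _] AS1; rewrite /connects AS1 andbT.
  apply/andP; split.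
    by apply: is_subgI => f; rewrite inE => /andP [_ /(is_subgP sS)].
  apply/andP; split=> //; apply/forall_inP => u uS; apply/forall_inP => w wS.
  exact: connect_sub del_conn _ _ (connectedP cS uS wS).
have := proj2 mS _ A_del; rewrite /sub_subg subxx subD1set => /(_ isT) E.
by move: eS; rewrite -{1}E /= !inE eqxx.
Qed.

Lemma side_cover z : z \in S.1 -> (z \in side x) || (z \in side y).
Proof.
move=> zS; rewrite !inE zS /=.
apply: (connect_inv (P := fun w => connect (adj_in del_edge) x w || connect (adj_in del_edge) y w))
  _ _ (connectedP cS bridge_end_in zS); last by rewrite connect0.
move=> u w + /adj_in_del_edge [uw|[[_ ->]|[_ ->]]]; rewrite ?connect0 ?orbT //.
by case/orP=> c; apply/orP; [left|right]; apply: connect_trans c (connect1 uw).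
Qed.

Lemma side_disjoint : [disjoint side x & side y].
Proof.
apply/pred0P => z /=; apply/negP; rewrite !inE => /andP [/andP [_ cx] /andP [_ cy]].
by move: bridge; rewrite (connect_trans cx) // connect_adj_in_sym.
Qed.

Lemma mem_side : x \in side x. Proof. by rewrite inE bridge_end_in connect0. Qed.

Lemma side_subg_is_subg : is_subg (side_subg x).
Proof. by apply: is_subgI => f; rewrite inE => /andP [_ /andP [-> ->]]. Qed.

Lemma side_subg_connected : connectedb (side_subg x).
Proof.
apply: (@connectedI _ (side_subg x) x mem_side) => z; rewrite inE => /andP [_ cz].
have := connect_restrict (P := connect (adj_in del_edge) x) _ (connect0 _ x) cz.
move=> /(_ (fun u v cu uv => connect_trans cu (connect1 uv))).
apply: connect_sub => u w /and3P [cu cw /adj_inP [/= uS wS [f fS j]]]; apply: connect1.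
have [ux wx] : u \in side x /\ w \in side x by rewrite !inE uS wS cu cw.
apply: (@adj_inI _ (side_subg x) u w f ux wx _ j); rewrite /= inE fS.
by case/joinsP: j => [][<- <-]; rewrite ux wx.
Qed.

Lemma side_subg_sub : sub_subg (side_subg x) S.
Proof.
by apply/andP; split; apply/subsetP => z; rewrite !inE => /andP [] // /andP [].
Qed.

Lemma side_subg_connects (X : {set gV K}) : X \subset side x -> connects X (side_subg x).
Proof. by move=> sX; rewrite /connects side_subg_is_subg side_subg_connected. Qed.

End Ends.

Lemma side_meets x y : joins e x y -> exists2 a, a \in A & a \in side x.
Proof.
move=> jxy; have jyx : joins e y x by rewrite joins_sym.
case: (boolP [exists a in A, a \in side x]) => [/exists_inP [a aA ax]|]; first by exists a.
rewrite negb_exists_in => /forall_inP Ax.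
have A_side : connects A (side_subg y).
  apply: (side_subg_connects jyx); apply/subsetP => a aA.
  have aS : a \in S.1 by case/and3P: AS => _ _ /subsetP; apply.
  by case/orP: (side_cover jxy aS) => //; rewrite (negbTE (Ax a aA)).
have E := proj2 mS _ A_side (side_subg_sub y).
have := bridge_end_in jxy; rewrite -E /= => xy.
by move: (side_disjoint jxy) => /pred0P /(_ x) /=; rewrite (mem_side jxy) xy.
Qed.

Lemma glength_sides (l : gE K -> R) x y : length_fun l -> joins e x y ->
  (glength l (side_subg x) + glength l (side_subg y) + l e <= glength l S)%R.
Proof.
move=> l0 jxy; rewrite !glengthE.
have d1 : [disjoint (side_subg x).2 & (side_subg y).2].
  apply/pred0P => f /=; apply/negP => /andP [/side_subg_edge [_ _ fx _] /side_subg_edge [_ _ fy _]].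
  by move: (side_disjoint jxy) => /pred0P /(_ (gends f).1) /=; rewrite fx fy.
have d2 : [disjoint (side_subg x).2 :|: (side_subg y).2 & [set e]].
  rewrite disjoint_sym disjoints1 in_setU.
  by apply/norP; split; apply/negP => /side_subg_edge [_]; rewrite eqxx.
have -> : l e = \rsum_(f in [set e]) l f by rewrite big_set1.
rewrite -(rsum_setU_disjoint _ d1) -(rsum_setU_disjoint _ d2).
apply: rsum_subset_le => [f _|]; first exact: Rlt_le.
by apply/subsetP => f; rewrite !in_setU in_set1 => /orP [/orP [] /side_subg_edge [] //|/eqP ->].
Qed.

End Bridges.

Lemma connects_subset (K : graph) (A A' : {set gV K}) S :
  A \subset A' -> connects A' S -> connects A S.
Proof. by move=> sA /and3P [sS cS sA']; rewrite /connects sS cS (subset_trans sA sA'). Qed.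

Lemma connects_single (K : graph) (v : gV K) : connects set0 ([set v], set0).
Proof.
rewrite /connects sub0set andbT; apply/andP; split; first by apply: is_subgI => f; rewrite inE.
by apply: (@connectedI _ ([set v], set0) v) => [|z /set1P ->]; rewrite ?set11 ?connect0.
Qed.

Section JoinByEdge.
Variables (K : graph) (A1 A2 : {set gV K}) (S1 S2 : subg K) (h : gE K) (x y : gV K).
Hypotheses (AS1 : connects A1 S1) (AS2 : connects A2 S2)
  (xS1 : x \in S1.1) (yS2 : y \in S2.1) (jxy : joins h x y).

Definition join_by_edge : subg K := (S1.1 :|: S2.1, S1.2 :|: S2.2 :|: [set h]).

Lemma connects_join_by_edge : connects (A1 :|: A2) join_by_edge.
Proof.
case/and3P: AS1 => sS1 cS1 aS1; case/and3P: AS2 => sS2 cS2 aS2.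
have sub1 : sub_subg S1 join_by_edge by rewrite /sub_subg /= subsetUl -setUA subsetUl.
have sub2 : sub_subg S2 join_by_edge.
  by rewrite /sub_subg /= subsetUr -setUA setUCA subsetUl.
have conn_in S u w : sub_subg S join_by_edge -> connect (adj_in S) u w ->
    connect (adj_in join_by_edge) u w.
  case/andP => s1 s2; apply: connect_sub => a b ab; apply: connect1.
  exact: adj_in_subset s1 s2 ab.
apply/and3P; split; last by apply: setUSS.
- apply: is_subgI => f; rewrite /= !in_setU in_set1 => /orP [/orP [fS|fS]|/eqP ->].
  + by have [a b] := is_subgP sS1 fS; rewrite a b.
  + by have [a b] := is_subgP sS2 fS; rewrite a b !orbT.
  + by case/joinsP: jxy => [][<- <-]; rewrite xS1 yS2 orbT.
- apply: (@connectedI _ join_by_edge x); first by rewrite /= in_setU xS1.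
  move=> z; rewrite /= in_setU => /orP [zS|zS]; first exact: conn_in sub1 (connectedP cS1 xS1 zS).
  apply: (@connect_trans _ _ y); last exact: conn_in sub2 (connectedP cS2 yS2 zS).
  by apply: connect1; apply: (adj_inI _ _ _ jxy); rewrite /= !in_setU ?xS1 ?yS2 ?set11 ?orbT.
Qed.

Lemma glength_join_by_edge (l : gE K -> R) : length_fun l ->
  (glength l join_by_edge <= glength l S1 + glength l S2 + l h)%R.
Proof.
move=> l0; have l0' f : (0 <= l f)%R by apply: Rlt_le.
have -> : l h = \rsum_(f in [set h]) l f by rewrite big_set1.
rewrite !glengthE /=.
have := rsum_setU_le (S1.2 :|: S2.2) [set h] l0'; have := rsum_setU_le S1.2 S2.2 l0'; lra.
Qed.

End JoinByEdge.

(* The image of a subgraph under a vertex map [phi] and a partial edge map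
   [psi]; edges sent to [None] are contracted. *)
Section ImageSubgraph.
Variables (K1 K2 : graph) (phi : gV K1 -> gV K2) (psi : gE K1 -> option (gE K2)).
Variable S : subg K1.
Hypothesis sS : is_subg S.
Hypothesis psi_edge : forall e, e \in S.2 ->
  match psi e with
  | None => phi (gends e).1 = phi (gends e).2
  | Some f => is_true (joins f (phi (gends e).1) (phi (gends e).2))
  end.

Definition image_subg : subg K2 := (phi @: S.1, [set f | [exists e in S.2, psi e == Some f]]).

Lemma image_connects A : connects A S -> connects (phi @: A) image_subg.
Proof.
case/and3P=> _ cS aS; apply/and3P; split; last exact: imsetS.
  apply: is_subgI => f; rewrite inE => /exists_inP [e eS /eqP pe].
  have := psi_edge eS; rewrite pe => j; have [h1 h2] := is_subgP sS eS.
  by case/joinsP: j => [][<- <-]; split; apply: imset_f.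
case/andP: (cS) => /set0Pn [x0 x0S] _; apply: (@connectedI _ _ (phi x0)); first exact: imset_f.
move=> _ /imsetP [y yS ->].
apply: (connect_homo (e := adj_in S)) (connectedP cS x0S yS) => a b /adj_inP [aS1 bS1 [e eS j]].
have := psi_edge eS; case pe: (psi e) => [f|] fj; last first.
  by case/joinsP: j => [][-> ->]; rewrite fj connect0.
apply: connect1; apply: (@adj_inI _ image_subg _ _ f); rewrite ?imset_f //.
  by rewrite inE; apply/exists_inP; exists e; rewrite // pe.
by case/joinsP: j => [][-> ->] //; rewrite joins_sym.
Qed.

Lemma glength_image_subg (l : gE K2 -> R) : (forall f, 0 <= l f)%R ->
  (glength l image_subg <= \rsum_(e in S.2) oapp l 0%R (psi e))%R.
Proof.
move=> l0; rewrite glengthE /=.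
have c0 o : (0 <= oapp l 0%R o)%R by case: o => [f|] /=; [exact: l0|lra].
set X := [set f | _].
have -> : \rsum_(f in X) l f = \rsum_(o in Some @: X) oapp l 0%R o.
  by rewrite rsum_imset //; move=> a b _ _ [].
apply: Rle_trans (rsum_imset_le S.2 psi c0).
apply: rsum_subset_le => //; apply/subsetP => _ /imsetP [f + ->]; rewrite /X.
by rewrite inE => /exists_inP [e eS /eqP <-]; apply: imset_f.
Qed.

End ImageSubgraph.

Lemma embed_connects (K1 K2 : graph) (fV : gV K1 -> gV K2) (fE : gE K1 -> gE K2)
    (l : gE K2 -> R) A S :
  embedding fV fE -> length_fun l -> connects A S ->
  exists2 S', connects (fV @: A) S' & (glength l S' <= glength (fun e => l (fE e)) S)%R.
Proof.
case=> _ [_ fj] l0 AS; have sS : is_subg S by case/and3P: AS.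
have psi_edge e : e \in S.2 -> joins (fE e) (fV (gends e).1) (fV (gends e).2) by [].
exists (image_subg fV (fun e => Some (fE e)) S); first exact: image_connects.
rewrite [X in (_ <= X)%R]glengthE; apply: glength_image_subg => f; exact: Rlt_le.
Qed.

Lemma sd_gap (G G' : graph) (fV : gV G -> gV G') (fE : gE G -> gE G') (l : gE G' -> R) A :
  embedding fV fE -> length_fun l -> sd (fun e => l (fE e)) A <> sd l (fV @: A) ->
  exists S', exists2 g, (0 < g)%R & connects (fV @: A) S' /\
    forall Q, connects A Q -> (glength l S' + g <= glength (fun e => l (fE e)) Q)%R.
Proof.
move=> emb l0 neq; case E2: (sd l (fV @: A)) => [c|]; last first.
  case E1: (sd (fun e => l (fE e)) A) => [s|]; last by move: neq; rewrite E1 E2.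
  have [[Q AQ _] _] := sd_Some E1; have [S' AS' _] := embed_connects emb l0 AQ.
  by move: (sd_None E2 S'); rewrite AS'.
have [[S' AS' hc] minc] := sd_Some E2; exists S'.
case E1: (sd (fun e => l (fE e)) A) => [s|]; last first.
  exists 1%R; first lra.
  by split=> // Q AQ; move: (sd_None E1 Q); rewrite AQ.
have [[Q AQ hs] mins] := sd_Some E1; have [S'' AS'' le''] := embed_connects emb l0 AQ.
have cs : (c <= s)%R by have := minc _ AS''; lra.
have ne : s <> c by move=> e; apply: neq; rewrite E1 E2 e.
exists (s - c)%R; first lra.
by split=> // Q1 AQ1; have := mins _ AQ1; lra.
Qed.

(* Given the minor model (B, mE) of G in H and G ⊆ G', glue H and G' along
   the branch sets: each vertex fV v of G' is identified with a representative
   of B v. *)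
Section Glue.
Variables (H G G' : graph) (B : gV G -> {set gV H}) (mE : gE G -> gE H).
Variables (fV : gV G -> gV G') (fE : gE G -> gE G') (l : gE G' -> R).
Variables (eps M : R) (k : nat).
Variable v0 : gV G.
Hypotheses (B_conn : forall v, connectedb (induced (B v)))
  (B_disj : forall u v, u != v -> [disjoint B u & B v]) (mE_inj : injective mE)
  (mE_joins : forall g, exists x y,
     [/\ x \in B (gends g).1, y \in B (gends g).2 & joins (mE g) x y]).
Hypotheses (emb : embedding fV fE) (l_pos : length_fun l) (G_kgeo : k_geodesic k fV fE l).
Hypotheses (eps_pos : (0 < eps)%R) (M_pos : (0 < M)%R).

Lemma B_neq0 v : exists x, x \in B v.
Proof. by case/andP: (B_conn v) => /set0Pn [x xB] _; exists x. Qed.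

Definition rep v := xchoose (B_neq0 v).

Lemma rep_in v : rep v \in B v. Proof. exact: xchooseP. Qed.

Lemma B_uniq x u v : x \in B u -> x \in B v -> u = v.
Proof. by move=> xu xv; case: (eqVneq u v) => // /B_disj /pred0P /(_ x) /=; rewrite xu xv. Qed.

(* [v0] is a junk value for vertices of H outside every branch set. *)
Definition branch x : gV G := if [pick v | x \in B v] is Some v then v else v0.

Lemma branchP x v : x \in B v -> branch x = v.
Proof.
rewrite /branch => xv; case: pickP => [u xu|/(_ v)]; [exact: B_uniq xu xv|by rewrite xv].
Qed.

Lemma branch_rep v : branch (rep v) = v. Proof. exact: branchP (rep_in v). Qed.

Lemma connect_B v x y : x \in B v -> y \in B v -> connect (adj_in (induced (B v))) x y.
Proof. exact: connectedP (B_conn v). Qed.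

Let fV_inj : injective fV. Proof. by case: emb. Qed.

Definition fV_inv (w : gV G') : option (gV G) := [pick v | fV v == w].

Lemma fV_invK v : fV_inv (fV v) = Some v.
Proof. rewrite /fV_inv; case: pickP => [u /eqP /fV_inj -> //|/(_ v)]; by rewrite eqxx. Qed.

Lemma fV_inv_Some w v : fV_inv w = Some v -> fV v = w.
Proof. by rewrite /fV_inv; case: pickP => [u /eqP <- [->]|]. Qed.

Definition glue_vertex (w : gV G') : gV H + gV G' :=
  if fV_inv w is Some v then inl (rep v) else inr w.

Definition glue_ends (e : gE H + gE G') : (gV H + gV G') * (gV H + gV G') :=
  match e with
  | inl h => (inl (gends h).1, inl (gends h).2)
  | inr f => (glue_vertex (gends f).1, glue_vertex (gends f).2)
  end.

Lemma glue_noloop e : (glue_ends e).1 != (glue_ends e).2.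
Proof.
case: e => [h|f] /=; first by rewrite inj_eq; [exact: gnoloop|move=> a b []].
have := gnoloop f; rewrite /glue_vertex.
case E1: (fV_inv _) => [v1|]; case E2: (fV_inv _) => [v2|] // nl.
apply/eqP => [][r12]; move: nl; rewrite -(fV_inv_Some E1) -(fV_inv_Some E2).
by rewrite (B_uniq (rep_in v1) (_ : rep v1 \in B v2)) ?eqxx // r12 rep_in.
Qed.

Definition glued : graph := Graph glue_noloop.

Local Notation inlS A := [set (inl a : gV glued) | a in A].

Definition internal (h : gE H) : bool :=
  [exists v, ((gends h).1 \in B v) && ((gends h).2 \in B v)].
Definition model (h : gE H) : option (gE G) := [pick g | mE g == h].
Definition delta : R := (INR #|gE H| * eps)%R.

Definition glue_len (e : gE glued) : R :=
  match e with
  | inl h => if internal h then eps else if model h is Some g then l (fE g) else M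
  | inr f => (l f + delta)%R
  end.

Definition heavy (e : gE glued) : bool :=
  if e is inl h then ~~ internal h && (model h == None) else false.

Lemma delta_ge0 : (0 <= delta)%R.
Proof. by apply: Rmult_le_pos; [exact: pos_INR|lra]. Qed.

Lemma rsum_eps_le (X : {set gE H}) : (\rsum_(h in X) eps <= delta)%R.
Proof.
rewrite rsum_const; apply: Rmult_le_compat_r; first lra.
exact/le_INR/leP/max_card.
Qed.

Lemma model_Some h g : model h = Some g -> mE g = h.
Proof. by rewrite /model; case: pickP => [g' /eqP <- [->]|]. Qed.

Lemma model_mE g : model (mE g) = Some g.
Proof. rewrite /model; case: pickP => [g' /eqP /mE_inj -> //|/(_ g)]; by rewrite eqxx. Qed.

Lemma internalP h : internal h -> exists v, (gends h).1 \in B v /\ (gends h).2 \in B v.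
Proof. by case/existsP => v /andP [? ?]; exists v. Qed.

Lemma mE_ends g : exists x y, [/\ x \in B (gends g).1, y \in B (gends g).2 &
  ((gends (mE g)).1 = x /\ (gends (mE g)).2 = y) \/
  ((gends (mE g)).1 = y /\ (gends (mE g)).2 = x)].
Proof.
have [x [y [xB yB /joinsP j]]] := mE_joins g; exists x, y; split => //.
by case: j => [][-> ->]; [left|right].
Qed.

Lemma mE_not_internal g : ~~ internal (mE g).
Proof.
apply/negP => /internalP [v [h1 h2]]; have := gnoloop g.
have [x [y [xB yB [][e1 e2]]]] := mE_ends g; move: h1 h2; rewrite e1 e2 => h1 h2.
  by rewrite (B_uniq xB h1) (B_uniq yB h2) eqxx.
by rewrite (B_uniq xB h2) (B_uniq yB h1) eqxx.
Qed.

Lemma glue_len_mE g : glue_len (inl (mE g)) = l (fE g).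
Proof. by rewrite /= (negbTE (mE_not_internal g)) model_mE. Qed.

Lemma glue_len_pos : length_fun glue_len.
Proof.
move=> [h|f] /=; last by have := l_pos f; have := delta_ge0; lra.
by case: (internal h) => //; case: (model h).
Qed.

Lemma glue_len_ge0 e : (0 <= glue_len e)%R. Proof. exact: Rlt_le (glue_len_pos e). Qed.

Lemma rsum_internal_le (X : {set gE H}) : (forall h, h \in X -> internal h) ->
  (\rsum_(h in X) glue_len (inl h) <= delta)%R.
Proof.
move=> Xint; apply: Rle_trans (rsum_eps_le X).
by apply: Req_le; apply: eq_bigr => h /Xint /= ->.
Qed.

Lemma joins_inl (h : gE H) a b : joins (inl h : gE glued) (inl a) (inl b) = joins h a b.
Proof. by rewrite /joins /= !xpair_eqE !(inj_eq (@inl_inj _ _)). Qed.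

Lemma embedding_inl : embedding (inl : gV H -> gV glued) (inl : gE H -> gE glued).
Proof.
by split; [|split]; [move=> a b []|move=> a b []|move=> e; rewrite joins_inl joins_ends].
Qed.

(* Contracting the branch sets maps H (minus its heavy edges) onto G, and the
   glued graph onto G'. *)
Definition contract_e (h : gE H) : option (gE G) := if internal h then None else model h.

Lemma contract_edge h : ~~ heavy (inl h) ->
  match contract_e h with
  | None => branch (gends h).1 = branch (gends h).2
  | Some g => is_true (joins g (branch (gends h).1) (branch (gends h).2))
  end.
Proof.
rewrite /contract_e /=; case ih: (internal h) => /=.
  by move=> _; have [v [h1 h2]] := internalP ih; rewrite (branchP h1) (branchP h2).
case mh: (model h) => [g|] //= _; rewrite -(model_Some mh).
have [x [y [xB yB [][-> ->]]]] := mE_ends g; rewrite (branchP xB) (branchP yB) ?joins_ends //.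
by rewrite joins_sym joins_ends.
Qed.

Definition proj_v (z : gV glued) : gV G' :=
  match z with inl x => fV (branch x) | inr w => w end.
Definition proj_e (e : gE glued) : option (gE G') :=
  match e with inl h => omap fE (contract_e h) | inr f => Some f end.

Lemma proj_glue_vertex w : proj_v (glue_vertex w) = w.
Proof.
by rewrite /glue_vertex; case E: (fV_inv w) => [v|] //=; rewrite branch_rep (fV_inv_Some E).
Qed.

Lemma proj_edge e : ~~ heavy e ->
  match proj_e e with
  | None => proj_v (gends e).1 = proj_v (gends e).2
  | Some f => is_true (joins f (proj_v (gends e).1) (proj_v (gends e).2))
  end.
Proof.
case: e => [h|f] /=; last by rewrite !proj_glue_vertex joins_ends.
move/contract_edge; case: (contract_e h) => [g|] /=; last by move->.
by case: emb => _ [_ fj] /joinsP [][-> ->] //; rewrite joins_sym.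
Qed.

Lemma glue_len_proj e : ~~ heavy e -> (oapp l 0%R (proj_e e) <= glue_len e)%R.
Proof.
case: e => [h|f] /=; last by have := delta_ge0; lra.
rewrite /contract_e; case: (internal h) => /=; first lra.
by case: (model h) => [g|] //= _; lra.
Qed.

Lemma nonheavy_end_in_branch (e : gE glued) a z :
  ~~ heavy e -> joins e (inl a) z -> exists v, a \in B v.
Proof.
move=> nh /joinsP ea.
have {}ea : inl a = (gends e).1 \/ inl a = (gends e).2 by case: ea => [][-> _]; [left|right].
case: e nh ea => [h|f] /=; last first.
  by move=> _ []; rewrite /glue_vertex; case: fV_inv => [v|] // [->]; exists v; exact: rep_in.
case ih: (internal h) => /=.
  by have [v [h1 h2]] := internalP ih; exists v; case: ea => [][->].
case mh: (model h) => [g|] //= _; have [x [y [xB yB]]] := mE_ends g.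
by rewrite (model_Some mh) => ends; case: ends => [][-> ->]; case => [][->]; eexists; eassumption.
Qed.

Definition simulated (A : {set gV H}) (S : subg glued) : Prop :=
  exists2 T, connects A T & (glength (fun h => glue_len (inl h)) T <= glength glue_len S)%R.

Definition blowup (Q : subg G) : subg H :=
  (\bigcup_(v in Q.1) B v,
   [set h | [exists v in Q.1, ((gends h).1 \in B v) && ((gends h).2 \in B v)]] :|: mE @: Q.2).

Lemma mem_blowup (Q : subg G) v x : v \in Q.1 -> x \in B v -> x \in (blowup Q).1.
Proof. by move=> vQ xB; apply/bigcupP; exists v. Qed.

Lemma blowup_connects (A : {set gV G}) Q :
  connects A Q -> connects (\bigcup_(v in A) B v) (blowup Q).
Proof.
case/and3P=> sQ cQ aQ; apply/and3P; split.
- apply: is_subgI => h; rewrite inE => /orP [|/imsetP [g gQ ->]].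
    by rewrite inE => /exists_inP [v vQ /andP [h1 h2]]; split; exact: mem_blowup vQ _.
  have [g1 g2] := is_subgP sQ gQ; have [x [y [xB yB [][-> ->]]]] := mE_ends g.
    by split; [exact: mem_blowup g1 xB|exact: mem_blowup g2 yB].
  by split; [exact: mem_blowup g2 yB|exact: mem_blowup g1 xB].
- case/andP: (cQ) => /set0Pn [r rQ] _.
  apply: (@connectedI _ _ (rep r)); first exact: mem_blowup rQ (rep_in r).
  move=> z /bigcupP [w wQ zw].
  apply: (connect_blowup (eU := adj_in Q) (Q := mem Q.1)) (connectedP cQ rQ wQ) _ _ (rep_in r) zw.
  + by move=> u v /adj_inP [].
  + move=> u uQ x y xB yB; apply: connect_sub (connect_B xB yB) => a b /adj_inP [aB bB [h hB j]].
    apply: connect1; apply: (adj_inI (mem_blowup uQ aB) (mem_blowup uQ bB) _ j).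
    by move: hB; rewrite !inE => hB; apply/orP; left; apply/exists_inP; exists u.
  + move=> u v /adj_inP [uQ vQ [g gQ j]].
    have [x [y [xB yB jm]]] := mE_joins g; have [g1 g2] := is_subgP sQ gQ.
    have mQ : mE g \in (blowup Q).2 by rewrite inE imset_f ?orbT.
    case/joinsP: j => [][-> ->].
      by exists x, y; rewrite connect1 // (adj_inI (mem_blowup g1 xB) (mem_blowup g2 yB) mQ).
    exists y, x; rewrite connect1 // (adj_inI (mem_blowup g2 yB) (mem_blowup g1 xB) mQ) //.
    by rewrite joins_sym.
  + exact: rQ.
- by apply/bigcupsP => v vA; apply: (bigcup_sup _ (subsetP aQ v vA)).
Qed.

Lemma glength_blowup Q :
  (glength (fun h => glue_len (inl h)) (blowup Q) <= delta + glength (fun g => l (fE g)) Q)%R.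
Proof.
rewrite !glengthE /=; apply: Rle_trans (rsum_setU_le _ _ (fun h => glue_len_ge0 (inl h))) _.
apply: Rplus_le_compat.
  by apply: rsum_internal_le => h; rewrite inE => /exists_inP [v _ hv]; apply/existsP; exists v.
rewrite rsum_imset; last by move=> ? ? _ _ /mE_inj.
by apply: Req_le; apply: eq_bigr => g _; exact: glue_len_mE.
Qed.

(* The extra delta paid for blowing up is covered by the lengthened edge [inr f0]. *)
Lemma rsum_proj_le (S : subg glued) f0 : (forall e, e \in S.2 -> ~~ heavy e) -> inr f0 \in S.2 ->
  (delta + \rsum_(e in S.2) oapp l 0%R (proj_e e) <= glength glue_len S)%R.
Proof.
move=> nh f0S; rewrite glengthE (rsum_setD1 _ f0S) (rsum_setD1 _ f0S) /=.
rewrite [(l f0 + delta)%R]Rplus_comm Rplus_assoc; do 2 apply: Rplus_le_compat_l.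
by apply: rsum_le => e /setD1P [_ /nh]; exact: glue_len_proj.
Qed.

Lemma simulated_G'_edge (S : subg glued) (A : {set gV H}) (f0 : gE G') :
  #|A| <= k -> connects (inlS A) S -> (forall e, e \in S.2 -> ~~ heavy e) ->
  inr f0 \in S.2 -> simulated A S.
Proof.
move=> hA AS nh f0S; have [sS cS aS] := and3P AS.
have A_branch a : a \in A -> exists v, a \in B v.
  move=> aA; have aS1 : inl a \in S.1 by apply: (subsetP aS); exact: imset_f.
  have [z /adj_inP [_ _ [e eS j]]] := connected_incident sS cS f0S aS1.
  exact: nonheavy_end_in_branch (nh e eS) j.
have proj_A : connects (fV @: (branch @: A)) (image_subg proj_v proj_e S).
  have -> : fV @: (branch @: A) = proj_v @: inlS A by rewrite -!imset_comp.
  by apply: image_connects => // e /nh /proj_edge.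
have [c Ec] := sd_connects l proj_A; have [_ minc] := sd_Some Ec.
rewrite -G_kgeo in Ec; last exact: leq_trans (leq_imset_card _ _) hA.
have [[Q AQ hQ] _] := sd_Some Ec.
exists (blowup Q).
  apply: connects_subset (blowup_connects AQ); apply/subsetP => a aA.
  by have [v av] := A_branch a aA; apply/bigcupP; exists v; rewrite // -(branchP av) imset_f.
apply: Rle_trans (glength_blowup Q) _; rewrite hQ.
apply: Rle_trans (rsum_proj_le nh f0S); apply: Rplus_le_compat_l.
apply: Rle_trans (minc _ proj_A) _.
exact: glength_image_subg (fun f => Rlt_le _ _ (l_pos f)).
Qed.

Lemma simulated_no_G'_edge (S : subg glued) (A : {set gV H}) : connects (inlS A) S ->
  (forall f, inr f \notin S.2) -> simulated A S.
Proof.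
move=> AS noG'; have [sS cS aS] := and3P AS.
case: (boolP [exists w, inr w \in S.1]) => [/existsP [w wS] | /existsPn noG'v].
  suff -> : A = set0.
    exists ([set rep v0], set0); first exact: connects_single.
    by rewrite glengthE big_set0; apply: glength_ge0; exact: glue_len_pos.
  apply/setP => a; rewrite inE; apply/negP => aA.
  have aS1 : inl a \in S.1 by apply: (subsetP aS); exact: imset_f.
  have [z /adj_inP [_ _ [[h|f] eS j]]] := connect_first_step (connectedP cS wS aS1) isT.
    by case/joinsP: j => [][].
  by move: (noG' f); rewrite eS.
pose T : subg H := ([set x | inl x \in S.1], [set h | inl h \in S.2]).
exists T.
  apply/and3P; split.
  - by apply: is_subgI => h; rewrite !inE => /(is_subgP sS).
  - case/andP: (cS) => /set0Pn [[x|w] zS] _; last by move: (noG'v w); rewrite zS.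
    apply: (@connectedI _ T x); first by rewrite inE.
    move=> y; rewrite inE => yS.
    pose unl (z : gV glued) := if z is inl a then a else x.
    apply: (connect_homo (f := unl)) (connectedP cS zS yS) => a b /adj_inP [aS1 bS1 [e eS j]].
    case: a b e aS1 bS1 eS j => [a|a] [b|b] [h|f] //= aS1 bS1 eS j;
      rewrite ?joins_inl; try by [case/joinsP: j => [][]|move: (noG'v a); rewrite aS1|
                                  move: (noG'v b); rewrite bS1|move: (noG' f); rewrite eS].
    by apply: connect1; apply: (@adj_inI _ T a b h); rewrite ?inE.
  - by apply/subsetP => a aA; rewrite inE; apply: (subsetP aS); exact: imset_f.
rewrite !glengthE -(rsum_imset glue_len); last by move=> a b _ _ [].
apply: rsum_subset_le => [e _|]; first exact: glue_len_ge0.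
by apply/subsetP => _ /imsetP [h + ->]; rewrite inE.
Qed.

Lemma simulated_bridge (S : subg glued) (A : {set gV H}) h : #|A| <= k ->
  minimal (inlS A) S -> inl h \in S.2 ->
  (forall (S' : subg glued) (A' : {set gV H}),
     #|S'.2| < #|S.2| -> #|A'| <= k -> connects (inlS A') S' -> simulated A' S') ->
  simulated A S.
Proof.
move=> hA mS hS IH; set x1 := (gends h).1; set y1 := (gends h).2.
have jxy : joins (inl h : gE glued) (inl x1) (inl y1) by rewrite joins_inl joins_ends.
have jyx : joins (inl h : gE glued) (inl y1) (inl x1) by rewrite joins_sym.
pose AZ z := [set a in A | (inl a : gV glued) \in side S (inl h) z].
have card_side z z' w : joins (inl h : gE glued) z w -> #|z' |: AZ z| <= k.
  move=> jzw; have jwz : joins (inl h : gE glued) w z by rewrite joins_sym.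
  have [_ /imsetP [a aA ->] aw] := side_meets mS hS jwz.
  apply: leq_trans hA; apply: (card_setU1_le _ _ aA); first by apply/subsetP => b /setIdP [].
  rewrite inE aA /=; apply/negP => az.
  by move: (side_disjoint mS hS jzw) => /pred0P /(_ (inl a)) /=; rewrite az aw.
have side_connects z z' w : joins (inl h : gE glued) z w -> z = inl z' ->
    connects (inlS (z' |: AZ z)) (side_subg S (inl h) z).
  move=> jzw ez; apply: (side_subg_connects mS hS jzw); apply/subsetP => _ /imsetP [a + ->].
  by rewrite in_setU1 => /orP [/eqP ->|/setIdP [_ //]]; rewrite -ez (mem_side mS hS jzw).
have [TX AX lenX] := IH _ _ (card_side_subg hS _) (card_side _ x1 _ jxy)
  (side_connects _ _ _ jxy erefl).
have [TY AY lenY] := IH _ _ (card_side_subg hS _) (card_side _ y1 _ jyx)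
  (side_connects _ _ _ jyx erefl).
have x1X : x1 \in TX.1 by case/and3P: AX => _ _ /subsetP; apply; rewrite setU11.
have y1Y : y1 \in TY.1 by case/and3P: AY => _ _ /subsetP; apply; rewrite setU11.
exists (join_by_edge TX TY h).
  apply: connects_subset (connects_join_by_edge AX AY x1X y1Y (joins_ends h)).
  apply/subsetP => a aA; have aS : (inl a : gV glued) \in S.1.
    by case/and3P: (proj1 mS) => _ _ /subsetP; apply; exact: imset_f.
  case/orP: (side_cover mS hS jxy aS) => az; rewrite in_setU !in_setU1.
    by rewrite (_ : a \in AZ (inl x1)) ?orbT // inE aA az.
  by rewrite (_ : a \in AZ (inl y1)) ?orbT // inE aA az.
have := glength_join_by_edge TX TY h (fun e => glue_len_pos (inl e)).
have := glength_sides mS hS glue_len_pos jxy; lra.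
Qed.

Lemma simulated_all n (S : subg glued) (A : {set gV H}) : #|S.2| < n -> #|A| <= k ->
  connects (inlS A) S -> simulated A S.
Proof.
elim: n S A => [//|n IH] S A hS hA AS.
have [S0 mS0 /andP [_ sub2]] := exists_minimal AS.
suff [T AT lenT] : simulated A S0.
  by exists T => //; apply: Rle_trans lenT (glength_subset glue_len_pos sub2).
case: (boolP [exists e in S0.2, heavy e]) => [/exists_inP [[h|f] hS0 //] _|].
  apply: simulated_bridge hA mS0 hS0 _ => S' A' hS' hA'; apply: IH hA'.
  by have := subset_leq_card sub2; lia.
rewrite negb_exists_in => /forall_inP nh.
case: (boolP [exists f, inr f \in S0.2]) => [/existsP [f0 f0S]|/existsPn noG'].
  exact: simulated_G'_edge hA (proj1 mS0) nh f0S.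
exact: simulated_no_G'_edge (proj1 mS0) noG'.
Qed.

Lemma glued_k_geodesic : k_geodesic k (inl : gV H -> gV glued) (inl : gE H -> gE glued) glue_len.
Proof.
move=> A hA; apply: sd_eq => S AS.
  by have [S' AS' lenS'] := embed_connects embedding_inl glue_len_pos AS; exists S'.
exact: simulated_all (ltnSn _) hA AS.
Qed.

Section Witness.
Variables (A0 : {set gV G}) (S' : subg G') (g : R).
Hypotheses (AS' : connects (fV @: A0) S')
  (gap : forall Q, connects A0 Q -> (glength l S' + g <= glength (fun e => l (fE e)) Q)%R)
  (delta_small : (delta + INR #|gE G'| * delta < g)%R)
  (M_big : (glength l S' + g <= M)%R).

Definition blob (w : gV G') : {set gV glued} :=
  if fV_inv w is Some v then inlS (B v) else [set inr w].

Definition lift_vertices : {set gV H} := \bigcup_(v | fV v \in S'.1) B v.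

Definition lift_internal : {set gE H} :=
  [set h | [exists v, [&& fV v \in S'.1, (gends h).1 \in B v & (gends h).2 \in B v]]].

Definition lift_witness : subg glued :=
  (inlS lift_vertices :|: [set (inr w : gV glued) | w in S'.1 & fV_inv w == None],
   [set (inl h : gE glued) | h in lift_internal] :|: [set (inr f : gE glued) | f in S'.2]).

Lemma mem_lift v x : fV v \in S'.1 -> x \in B v -> (inl x : gV glued) \in lift_witness.1.
Proof. by move=> vS xB; rewrite in_setU imset_f //; apply/bigcupP; exists v. Qed.

Lemma glue_vertex_blob w : glue_vertex w \in blob w.
Proof.
by rewrite /glue_vertex /blob; case: fV_inv => [v|]; [apply: imset_f; exact: rep_in|exact: set11].
Qed.

Lemma blob_sub w : w \in S'.1 -> blob w \subset lift_witness.1.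
Proof.
move=> wS; rewrite /blob; case E: (fV_inv w) => [v|]; apply/subsetP => z.
  by case/imsetP => x xB ->; apply: mem_lift xB; rewrite (fV_inv_Some E).
by move/set1P ->; rewrite in_setU orbC imset_f // inE wS E.
Qed.

Lemma mem_lift_witness z : z \in lift_witness.1 -> exists2 w, w \in S'.1 & z \in blob w.
Proof.
rewrite in_setU => /orP [] /imsetP [x xX ->].
  case/bigcupP: xX => v vS xB; exists (fV v) => //; rewrite /blob fV_invK; exact: imset_f.
by move: xX; rewrite inE => /andP [xS /eqP E]; exists x => //; rewrite /blob E set11.
Qed.

Lemma lift_witness_is_subg : is_subg lift_witness.
Proof.
apply: is_subgI => e; rewrite in_setU => /orP [] /imsetP [h hX ->].
  by move: hX; rewrite inE => /existsP [v /and3P [vS h1 h2]]; split; apply: mem_lift vS _.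
have [sS' _ _] := and3P AS'; have [h1 h2] := is_subgP sS' hX.
by split; apply: (subsetP (blob_sub _)) (glue_vertex_blob _).
Qed.

Lemma connect_blob w : w \in S'.1 ->
  forall x y, x \in blob w -> y \in blob w -> connect (adj_in lift_witness) x y.
Proof.
move=> wS x y; rewrite /blob; case E: (fV_inv w) => [v|]; last by move=> /set1P -> /set1P ->.
move=> /imsetP [x' x'B ->] /imsetP [y' y'B ->]; have vS : fV v \in S'.1 by rewrite (fV_inv_Some E).
apply: (connect_homo (e := adj_in (induced (B v)))) (connect_B x'B y'B).
move=> a b /adj_inP [aB bB [h hB j]]; apply: connect1.
apply: (@adj_inI _ lift_witness _ _ (inl h) (mem_lift vS aB) (mem_lift vS bB)); last first.
  by rewrite joins_inl.
move: hB; rewrite !inE => /andP [h1 h2]; rewrite imset_f // inE.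
by apply/existsP; exists v; rewrite vS h1 h2.
Qed.

Lemma adj_in_lift u v : adj_in S' u v ->
  adj_in lift_witness (glue_vertex u) (glue_vertex v).
Proof.
move=> /adj_inP [uS vS [f fS j]].
apply: (adj_inI (subsetP (blob_sub uS) _ (glue_vertex_blob u))
  (subsetP (blob_sub vS) _ (glue_vertex_blob v)) (_ : inr f \in _)).
  by rewrite in_setU orbC imset_f.
have jf := joins_ends (inr f : gE glued).
by case/joinsP: j => [][-> ->] //; rewrite joins_sym.
Qed.

Lemma lift_witness_connects : connects (inlS (rep @: A0)) lift_witness.
Proof.
have [_ cS' aS'] := and3P AS'; rewrite /connects lift_witness_is_subg /=.
apply/andP; split; last first.
  apply/subsetP => _ /imsetP [_ /imsetP [v vA ->] ->].
  by apply: (mem_lift _ (rep_in v)); apply: (subsetP aS'); exact: imset_f.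
case/andP: (cS') => /set0Pn [r rS] _.
apply: (@connectedI _ lift_witness (glue_vertex r)).
  exact: (subsetP (blob_sub rS)) _ (glue_vertex_blob r).
move=> z /mem_lift_witness [w wS zw].
apply: (connect_blowup (eU := adj_in S') (Q := mem S'.1)) (connectedP cS' rS wS) _ _
  (glue_vertex_blob r) zw.
- by move=> u v /adj_inP [].
- exact: connect_blob.
- move=> u v uv; exists (glue_vertex u), (glue_vertex v).
  by rewrite !glue_vertex_blob connect1 // adj_in_lift.
- exact: rS.
Qed.

Lemma glength_lift_witness : (glength glue_len lift_witness < glength l S' + g)%R.
Proof.
rewrite !glengthE; apply: Rle_lt_trans (rsum_setU_le _ _ glue_len_ge0) _.
rewrite !rsum_imset; try by move=> a b _ _ [].
have int_le : (\rsum_(h in lift_internal) glue_len (inl h) <= delta)%R.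
  apply: rsum_internal_le => h; rewrite inE => /existsP [v /and3P [_ h1 h2]].
  by apply/existsP; exists v; rewrite h1 h2.
have delta_le : (\rsum_(f in S'.2) delta <= INR #|gE G'| * delta)%R.
  rewrite -cardsT -rsum_const.
  by apply: rsum_subset_le => [f _|]; [exact: delta_ge0|exact: subsetT].
have -> : \rsum_(f in S'.2) glue_len (inr f) =
          (\rsum_(f in S'.2) l f + \rsum_(f in S'.2) delta)%R by rewrite -big_split.
lra.
Qed.

Lemma glength_connects_rep_ge (T : subg H) : connects (rep @: A0) T ->
  (glength l S' + g <= glength (fun h => glue_len (inl h)) T)%R.
Proof.
move=> AT; have [sT cT aT] := and3P AT.
case: (boolP [exists h in T.2, heavy (inl h)]) => [/exists_inP [h hT hh]|/exists_inP nh].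
  rewrite [glength _ T]glengthE (rsum_setD1 _ hT).
  have : (0 <= \rsum_(y in T.2 :\ h) glue_len (inl y))%R.
    by apply: rsum_ge0 => *; exact: glue_len_ge0.
  by move: hh => /= /andP [/negbTE -> /eqP ->]; lra.
have nh' h : h \in T.2 -> ~~ heavy (inl h) by move=> hT; apply/negP => hh; apply: nh; exists h.
have brA : branch @: (rep @: A0) = A0.
  by rewrite -imset_comp (eq_imset _ branch_rep) imset_id.
have AQ : connects A0 (image_subg branch contract_e T).
  by rewrite -{1}brA; apply: image_connects => // h /nh' /contract_edge.
apply: Rle_trans (gap AQ) _.
apply: Rle_trans (glength_image_subg _ _ _ (fun f => Rlt_le _ _ (l_pos (fE f)))) _.
rewrite [glength _ T]glengthE; apply: rsum_le => h /nh'; rewrite /contract_e /=.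
by case: (internal h) => /=; [lra|case: (model h) => [g'|] //= _; lra].
Qed.

Lemma glued_not_fully_geodesic :
  sd (fun h => glue_len (inl h)) (rep @: A0) <> sd glue_len (inlS (rep @: A0)).
Proof.
apply: (sd_neq lift_witness_connects) => T AT.
by have := glength_connects_rep_ge AT; have := glength_lift_witness; lra.
Qed.

End Witness.

End Glue.

Lemma exists_small_eps (N N' g : R) : (0 <= N)%R -> (0 <= N')%R -> (0 < g)%R ->
  exists2 eps, (0 < eps)%R & (N * eps + N' * (N * eps) < g)%R.
Proof.
move=> N0 N'0 g0; pose d := (2 * (N + 1) * (N' + 1))%R.
have d0 : (0 < d)%R by rewrite /d; nra.
set e := (g / d)%R; have e0 : (0 < e)%R := Rdiv_lt_0_compat _ _ g0 d0.
have ge : g = (e * d)%R by rewrite /e; field; lra.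
have pos : (0 < e * (N * N' + N + 2 * N' + 2))%R by apply: Rmult_lt_0_compat => //; nra.
by exists e => //; rewrite ge /d; nra.
Qed.

Theorem theorem6p1 (k : nat) : 2 <= k ->
  forall H G : graph, in_Hk k H -> minor G H -> in_Hk k G.
Proof.
move=> _ H G HHk [B [mE [B_conn [B_disj [mE_inj mE_joins]]]]] G' fV fE l emb l_pos G_kgeo A0.
case: (pickP (fun _ : gV G => true)) => [v0 _|noV]; last first.
  have -> : A0 = set0 by apply/setP => v; have := noV v.
  by apply: G_kgeo; rewrite cards0.
apply: NNPP => neq; have [S' [g g0 [AS' gap]]] := sd_gap emb l_pos neq.
have [eps eps0 small] := exists_small_eps (pos_INR #|gE H|) (pos_INR #|gE G'|) g0.
pose M := (glength l S' + g)%R.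
have M0 : (0 < M)%R by have := glength_ge0 S' l_pos; rewrite /M; lra.
apply: (glued_not_fully_geodesic v0 mE_joins emb l_pos eps0 M0 AS' gap small (Rle_refl M)).
apply: (HHk _ _ _ _ (embedding_inl fV B_conn B_disj) (glue_len_pos mE fE l_pos eps0 M0)).
exact: glued_k_geodesic v0 B_conn B_disj mE_inj mE_joins emb l_pos G_kgeo eps0 M0.
Qed.
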